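(* Let $G=\langle s_1,s_2\mid s_2s_2=s_2\rangle$ and $\mathcal{A}=\{1,2\}$. Let $X\subseteq\mathcal{A}^G$ be a nonempty $G$-shift space, and for $n\ge 0$ let $\gamma_n$ be the number of distinct restrictions $t|_{E_n}$ with $t\in X$. Then the limit $$h(X)=\lim_{n\to\infty}\frac{\ln\gamma_n}{|E_n|}$$ exists (equivalently, the $\limsup$ defining the topological entropy is a limit).
   Context: $G$ is the monoid (identity $e$) generated by $s_1,s_2$ subject only to the relation $s_2s_2=s_2$; each element is represented uniquely by a finite word over $\{s_1,s_2\}$ containing no factor $s_2s_2$, and $|g|$ denotes the length of this word. $E_n=\{g\in G:|g|\le n\}$. For $t\in\mathcal{A}^G$ write $t_g=t(g)$. An $n$-block is a map $\tau:E_n\to\mathcal{A}$; a configuration $t$ accepts $\tau$ if there is $g\in G$ with $t_{gg'}=\tau_{g'}$ for all $g'\in E_n$, and avoids it otherwise. A $G$-shift space is a set $X\subseteq\mathcal{A}^G$ consisting of all configurations that avoid every block in some given set of forbidden blocks. The topological entropy is defined as $h(X)=\limsup_{n\to\infty}\ln\gamma_n/|E_n|$. *)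

From HB Require Import structures.
From mathcomp Require Import all_boot all_order all_algebra.
From mathcomp Require Import all_classical all_reals all_analysis.
Set Implicit Arguments. Unset Strict Implicit. Unset Printing Implicit Defensive.

(* Words over {s1,s2}: false = s1, true = s2. *)
Fixpoint reduced (w : seq bool) : bool :=
  match w with
  | b :: ((c :: _) as w') => ~~ (b && c) && reduced w'
  | _ => true
  end.

(* The monoid G = <s1,s2 | s2 s2 = s2>, elements = reduced words (normal forms). *)
Definition G := {w : seq bool | reduced w}.

(* normal form: collapse every factor s2 s2 to s2 *)
Fixpoint red (w : seq bool) : seq bool :=
  match w with
  | [::] => [::]
  | b :: w' => let r := red w' in if b && head false r then r else b :: r
  end.

Lemma red_reduced w : reduced (red w).
Proof.
elim: w => [|b w IH] //=.
case: (red w) IH => [|c r] IH; first by case: b.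
by case: b; case: c IH => //= ->.
Qed.

Definition gmul (g h : G) : G := exist _ (red (val g ++ val h)) (red_reduced _).
Definition gone : G := exist _ [::] isT.

Definition glen (g : G) : nat := size (val g).

Definition Esub (n : nat) := {g : G | glen g <= n}.
Definition block (n : nat) := Esub n -> bool.

(* alphabet A = {1,2}, encoded as bool *)
Definition config := G -> bool.

Definition accepts (t : config) (n : nat) (tau : block n) : Prop :=
  exists g : G, forall g' : Esub n, t (gmul g (val g')) = tau g'.

Definition shift (F : forall n : nat, set (block n)) : set config :=
  [set t | forall (n : nat) (tau : block n), F n tau -> ~ accepts t tau].

Definition is_shift_space (X : set config) : Prop :=
  exists F : forall n : nat, set (block n), X = shift F.

(* explicit duplicate-free enumeration of E_n *)
Definition words (n : nat) : seq (seq bool) :=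
  flatten [seq [seq val x | x <- enum {: k.-tuple bool}] | k <- iota 0 n.+1].
Definition Elist (n : nat) : seq G := pmap (fun w => (insub w : option G)) (words n).

Definition card_En (n : nat) : nat := size (Elist n).

(* t|_{E_n}, as the tuple of values along the enumeration of E_n *)
Definition restr (t : config) (n : nat) : (card_En n).-tuple bool :=
  map_tuple t (in_tuple (Elist n)).

Definition n_patterns (X : set config) (n : nat) : nat :=
  #|[set p : (card_En n).-tuple bool | `[< exists2 t, X t & restr t n = p >] ]|.

(* The ball decomposes as E_(n+2) = {e, s2} + s1 E_(n+1) + s2 s1 E_n, so |E_n| grows at
   least like a Fibonacci sequence, while a pattern on E_(n+2) is determined by its values
   at e and s2 and by the patterns read on the two translated balls; shift invariance of X
   gives gamma_(n+2) <= 4 gamma_(n+1) gamma_n.  Hence u_n = ln (4 gamma_n) and c_n = |E_n|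
   satisfy u_(n+2) <= u_(n+1) + u_n and c_(n+2) >= c_(n+1) + c_n.  For such sequences the
   maximum of two consecutive ratios u_n / c_n is nonincreasing, and once it is close to its
   limit L the next ratio cannot drop far below L, so u_n / c_n converges (a two-step
   variant of Fekete's lemma); finally ln 4 / |E_n| tends to 0. *)
From Pilot Require Import Defs.
From HB Require Import structures.
From mathcomp Require Import all_boot all_order all_algebra.
From mathcomp Require Import all_classical all_reals all_analysis.
From mathcomp Require Import lra zify.
Set Implicit Arguments. Unset Strict Implicit. Unset Printing Implicit Defensive.

Import Order.TTheory GRing.Theory Num.Theory numFieldNormedType.Exports.
Local Open Scope classical_set_scope.
Local Open Scope ring_scope.

Definition fcons (b : bool) (r : seq bool) := if b && head false r then r else b :: r.

Lemma head_red b w : head false (red (b :: w)) = b.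
Proof. by case: b => //=; case: ifP. Qed.

Lemma reduced_behead b w : reduced (b :: w) -> reduced w.
Proof. by case: w => //= c w /andP[]. Qed.

Lemma red_id w : reduced w -> red w = w.
Proof.
elim: w => [|b w IH] //= Hw.
rewrite (IH (reduced_behead Hw)).
case: w Hw {IH} => [|c w] /=; first by rewrite andbF.
by case/andP => /negbTE ->.
Qed.

Lemma red_fcons_cat b r v :
  reduced r -> red (fcons b r ++ v) = fcons b (red (r ++ v)).
Proof. by rewrite /fcons; case: b; case: r => [|[] r] //= _; rewrite head_red. Qed.

Lemma red_catl u v : red (red u ++ v) = red (u ++ v).
Proof. by elim: u => [|b u IH] //=; rewrite red_fcons_cat ?red_reduced // IH. Qed.

Lemma red_catr u v : red (u ++ red v) = red (u ++ v).
Proof. by elim: u => [|b u /= ->] //=; rewrite red_id ?red_reduced. Qed.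

Lemma gmulA (a b c : G) : gmul a (gmul b c) = gmul (gmul a b) c.
Proof. by apply: val_inj => /=; rewrite red_catr red_catl catA. Qed.

Definition s1 : G := exist _ [:: false] isT.
Definition s2 : G := exist _ [:: true] isT.
Definition s2s1 : G := exist _ [:: true; false] isT.

Lemma val_gmul_s1 h : val (gmul s1 h) = false :: val h.
Proof. by rewrite /= red_id //; case: h. Qed.

Lemma val_gmul_s2s1 h : val (gmul s2s1 h) = true :: false :: val h.
Proof. by rewrite /= red_id //; case: h. Qed.

Lemma gmul_s1_inj : injective (gmul s1).
Proof. by move=> g h /(congr1 val); rewrite !val_gmul_s1 => -[/val_inj]. Qed.

Lemma gmul_s2s1_inj : injective (gmul s2s1).
Proof. by move=> g h /(congr1 val); rewrite !val_gmul_s2s1 => -[/val_inj]. Qed.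

Lemma glen_gmul_s1 h : glen (gmul s1 h) = (glen h).+1.
Proof. by rewrite /glen val_gmul_s1. Qed.

Lemma glen_gmul_s2s1 h : glen (gmul s2s1 h) = (glen h).+2.
Proof. by rewrite /glen val_gmul_s2s1. Qed.

Lemma glen_leqSS_split (g : G) n : (glen g <= n.+2)%N ->
  [\/ g = gone, g = s2, exists2 h, (glen h <= n.+1)%N & g = gmul s1 h
    | exists2 h, (glen h <= n)%N & g = gmul s2s1 h].
Proof.
case: g => -[|[] w] Hw Hs; first by apply: Or41; apply: val_inj.
- case: w Hw Hs => [|[] w] // Hw Hs; first by apply: Or42; apply: val_inj.
  have Hr : reduced w := reduced_behead (reduced_behead Hw).
  apply: Or44; exists (exist _ w Hr); first exact: Hs.
  by apply: val_inj; rewrite val_gmul_s2s1.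
- apply: Or43; exists (exist _ w (reduced_behead Hw)) => //.
  by apply: val_inj; rewrite val_gmul_s1.
Qed.

Lemma mem_words w n : (w \in words n) = (size w <= n)%N.
Proof.
apply/flatten_mapP/idP => [[k] | Hw].
  by rewrite mem_iota add0n ltnS => Hk /mapP [x _ ->]; rewrite size_tuple.
exists (size w); first by rewrite mem_iota add0n ltnS.
by apply/mapP; exists (@Tuple _ bool w (eqxx _)); rewrite ?mem_enum.
Qed.

Lemma mem_Elist (g : G) n : (g \in Elist n) = (glen g <= n)%N.
Proof. by rewrite /Elist mem_pmap_sub mem_words. Qed.

Lemma uniq_words n : uniq (words n).
Proof.
elim: n => [|n IH]; first by rewrite /words /= cats0 (map_inj_uniq val_inj) enum_uniq.
rewrite /words -addn1 iotaD map_cat flatten_cat /= cats0 -/(words n).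
rewrite cat_uniq IH (map_inj_uniq val_inj) enum_uniq andbT /=.
by apply/hasPn => _ /mapP [x _ ->]; rewrite mem_words size_tuple ltnn.
Qed.

Lemma uniq_Elist n : uniq (Elist n).
Proof. exact: pmap_sub_uniq (uniq_words n). Qed.

Lemma card_En_gt0 n : (0 < card_En n)%N.
Proof. by rewrite /card_En -has_predT; apply/hasP; exists gone; rewrite ?mem_Elist. Qed.

Lemma card_En_ltS n : (card_En n < card_En n.+1)%N.
Proof.
have nseq_reduced k : reduced (nseq k false) by elim: k => [|[]].
pose w : G := exist _ (nseq n.+1 false) (nseq_reduced _).
have := @uniq_leq_size _ (w :: Elist n) (Elist n.+1).
rewrite /= uniq_Elist mem_Elist /glen /= size_nseq ltnn; apply=> // g.
by rewrite inE !mem_Elist => /predU1P [-> | /leqW]; rewrite // /glen size_nseq.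
Qed.

Lemma card_En_gt n : (n < card_En n)%N.
Proof. by elim: n => [|n IH]; [exact: card_En_gt0 | exact: leq_ltn_trans IH (card_En_ltS n)]. Qed.

Lemma card_En_SS n : (card_En n.+1 + card_En n <= card_En n.+2)%N.
Proof.
have := @uniq_leq_size _ (map (gmul s1) (Elist n.+1) ++ map (gmul s2s1) (Elist n)) (Elist n.+2).
rewrite size_cat !size_map; apply.
  rewrite cat_uniq !map_inj_uniq ?uniq_Elist ?andbT //=;
    [|exact: gmul_s2s1_inj|exact: gmul_s1_inj].
  apply/hasPn => _ /mapP [h _ ->]; apply/mapP => -[h' _ /(congr1 val)].
  by rewrite val_gmul_s1 val_gmul_s2s1.
move=> g; rewrite mem_cat => /orP [] /mapP [h]; rewrite !mem_Elist => Hh ->.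
  by rewrite glen_gmul_s1.
by rewrite glen_gmul_s2s1 !ltnS.
Qed.

Lemma restr_eqP (t t' : config) n : restr t n = restr t' n <-> {in Elist n, t =1 t'}.
Proof. by split => [/(congr1 val) /eq_in_map | /eq_in_map E]; last apply: val_inj. Qed.

Definition translate (g0 : G) (t : config) : config := fun h => t (gmul g0 h).

Lemma shift_translate (F : forall n : nat, set (block n)) (t : config) (g0 : G) :
  Defs.shift F t -> Defs.shift F (translate g0 t).
Proof.
move=> Ht n tau Ftau [g Hg]; apply: (Ht n tau Ftau).
by exists (gmul g0 g) => g'; rewrite -gmulA -Hg.
Qed.

Lemma shift_space_translate (X : set config) (t : config) (g0 : G) :
  is_shift_space X -> X t -> X (translate g0 t).
Proof. by case=> F ->; apply: shift_translate. Qed.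

Lemma restr_SS_determined (t t' : config) n :
  t gone = t' gone -> t s2 = t' s2 ->
  restr (translate s1 t) n.+1 = restr (translate s1 t') n.+1 ->
  restr (translate s2s1 t) n = restr (translate s2s1 t') n ->
  restr t n.+2 = restr t' n.+2.
Proof.
move=> E0 E2 /restr_eqP E1 /restr_eqP E21; apply/restr_eqP => g.
rewrite mem_Elist => /glen_leqSS_split [-> | -> | [h Hh ->] | [h Hh ->]] //.
  by apply: E1; rewrite mem_Elist.
by apply: E21; rewrite mem_Elist.
Qed.

Definition patterns_of (T : Type) (A : finType) (S : set T) (f : T -> A) : {set A} :=
  [set a | `[< exists2 t, S t & f t = a >] ]%SET.

Lemma mem_patterns_of (T : Type) (A : finType) (S : set T) (f : T -> A) t :
  S t -> f t \in patterns_of S f.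
Proof. by move=> St; rewrite inE; apply/asboolP; exists t. Qed.

Lemma card_patterns_of_le (T : Type) (A B : finType) (S : set T) (f : T -> A) (g : T -> B) :
  (forall t t', f t = f t' -> g t = g t') ->
  (#|patterns_of S g| <= #|patterns_of S f|)%N.
Proof.
move=> fg; have [-> | [b0]] := set_0Vmem (patterns_of S g); first by rewrite cards0.
rewrite inE => /asboolP [t0 _ _].
have /choice [r Hr] : forall b : B, exists t : T, b \in patterns_of S g -> S t /\ g t = b.
  move=> b; have [|_] := boolP (b \in patterns_of S g); last by exists t0.
  by rewrite inE => /asboolP [t St <-]; exists t.
have r_inj : {in patterns_of S g &, injective (f \o r)}.
  move=> b b' Pb Pb' /= /fg.
  by have [_ ->] := Hr b Pb; have [_ ->] := Hr b' Pb'.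
rewrite -(card_in_imset r_inj); apply/subset_leq_card/fintype.subsetP => _ /imsetP [b Pb ->].
by have [Sr _] := Hr b Pb; apply: mem_patterns_of.
Qed.

Lemma n_patterns_gt0 (X : set config) n : X !=set0 -> (0 < n_patterns X n)%N.
Proof. by case=> t Xt; apply/card_gt0P; exists (restr t n); apply: mem_patterns_of. Qed.

Lemma n_patterns_SS (X : set config) n : is_shift_space X ->
  (n_patterns X n.+2 <= 4 * n_patterns X n.+1 * n_patterns X n)%N.
Proof.
move=> shiftX; pose split_restr t :=
  (t gone, t s2, restr (translate s1 t) n.+1, restr (translate s2s1 t) n).
apply: leq_trans (@card_patterns_of_le _ _ _ X split_restr (restr^~ n.+2) _) _.
  move=> t t'; rewrite /split_restr => -[E0 E2 E1 E21].
  by apply: restr_SS_determined => //; apply: val_inj.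
apply: (@leq_trans #|finset.setX (finset.setX (finset.setX [set: bool]%SET [set: bool]%SET)
                      (patterns_of X (restr^~ n.+1))) (patterns_of X (restr^~ n))|).
  apply/subset_leq_card/fintype.subsetP => p; rewrite inE => /asboolP [t Xt <-].
  rewrite !finset.in_setX !finset.in_setT /=.
  by apply/andP; split; apply: (mem_patterns_of (restr^~ _)); apply: shift_space_translate.
by rewrite !cardsX cardsT card_bool.
Qed.

Section TwoStepFekete.

Variables (R : realType) (u c : nat -> R).
Hypotheses (u_ge0 : forall n, 0 <= u n) (c_gt0 : forall n, 0 < c n).
Hypotheses (c_leS : forall n, c n <= c n.+1) (c_SS : forall n, c n.+1 + c n <= c n.+2).
Hypothesis (u_SS : forall n, u n.+2 <= u n.+1 + u n).

Let a n := u n / c n.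
Let M n := Num.max (a n.+1) (a n).

Let u_ratio n : u n = a n * c n.
Proof. by rewrite /a divfK // gt_eqF. Qed.

Let ratioS_le_max n : a n.+1 <= M n.
Proof. by rewrite le_max lexx. Qed.

Let ratio_le_max n : a n <= M n.
Proof. by rewrite le_max lexx orbT. Qed.

Let max_ge0 n : 0 <= M n.
Proof. exact: le_trans (divr_ge0 (u_ge0 n) (ltW (c_gt0 n))) (ratio_le_max n). Qed.

(* u_(n+2) / c_(n+2) is at most a weighted mean of the two previous ratios. *)
Let ratioSS_le_max n : a n.+2 <= M n.
Proof.
rewrite /a ler_pdivrMr // (le_trans (u_SS n)) // 2!u_ratio.
have h1 := ler_wpM2r (ltW (c_gt0 n.+1)) (ratioS_le_max n).
have h2 := ler_wpM2r (ltW (c_gt0 n)) (ratio_le_max n).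
have h3 := ler_wpM2l (max_ge0 n) (c_SS n).
lra.
Qed.

Let max_nonincreasing : {homo M : n m / (n <= m)%N >-> m <= n}.
Proof.
apply/nonincreasing_seqP => n.
by rewrite /M ge_max ratioSS_le_max ratioS_le_max.
Qed.

Let max_lbound : has_lbound (range M).
Proof. by exists 0 => _ [n _ <-]. Qed.

Let L := inf (range M).

Let cvg_max : M @ \oo --> L.
Proof. exact: nonincreasing_cvgn max_nonincreasing max_lbound. Qed.

Let inf_le_max n : L <= M n.
Proof. by apply: ge_inf max_lbound _ _; exists n. Qed.

Let inf_ge0 : 0 <= L.
Proof. by apply: lb_le_inf; [exists (M 0), 0 | move=> _ [n _ <-]]. Qed.

(* If a_(n+1) < L then a_(n+2) >= L, and the mean bound on a_(n+2) pushes a_(n+1) back up. *)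
Let ratioS_ge n : L + (L - M n) <= a n.+1.
Proof.
have [|lt_aL] := leP L (a n.+1); first by have := inf_le_max n; lra.
have le_La : L <= a n.+2.
  by have := inf_le_max n.+1; rewrite le_max => /orP [//|]; lra.
have e1 : L * c n.+2 <= c n.+1 * a n.+1 + c n * a n.
  have := ler_wpM2r (ltW (c_gt0 n.+2)) le_La.
  by have := u_SS n; rewrite !u_ratio; lra.
have e2 := ler_wpM2l inf_ge0 (c_SS n).
have e3 := ler_wpM2l (ltW (c_gt0 n)) (ratio_le_max n).
have e4 : c n * (L - M n) >= c n.+1 * (L - M n).
  by have := c_leS n; have := inf_le_max n; nra.
suff : c n.+1 * (L + (L - M n)) <= c n.+1 * a n.+1 by rewrite ler_pM2l.
lra.
Qed.

Lemma cvg_ratio_two_step_fekete : exists l : R, (fun n => u n / c n) @ \oo --> l.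
Proof.
exists L; rewrite -(cvg_shiftn 1) /=.
apply: (@squeeze_cvgr _ _ _ _ (fun n => L + (L - M n)) M).
- by apply: nearW => n; rewrite addn1 ratioS_ge ratioS_le_max.
- rewrite -[X in _ --> X]addr0 -[X in _ + X](subrr L).
  by apply: cvgD; [exact: cvg_cst | apply: cvgB => //; exact: cvg_cst].
- exact: cvg_max.
Qed.

End TwoStepFekete.

Lemma cvg_inv_card_En (R : realType) : (fun n => ((card_En n)%:R : R)^-1) @ \oo --> 0.
Proof.
apply: (@squeeze_cvgr _ _ _ _ (fun _ => 0) harmonic); last exact: cvg_harmonic.
- apply: nearW => n /=; rewrite invr_ge0 ler0n lef_pV2 ?posrE ?ltr0n ?card_En_gt0 //.
  by rewrite ler_nat card_En_gt.
- exact: cvg_cst.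
Qed.

Theorem theorem1 (R : realType) (X : set config) :
  is_shift_space X -> X !=set0 ->
  exists l : R,
    (fun n : nat => ln ((n_patterns X n)%:R : R) / ((card_En n)%:R : R)) @ \oo --> l.
Proof.
move=> shiftX X0.
have gamma_pos n : 0 < (4 * n_patterns X n)%:R :> R by rewrite ltr0n muln_gt0 n_patterns_gt0.
pose u n : R := ln ((4 * n_patterns X n)%:R).
pose c n : R := (card_En n)%:R.
have [l ul] : exists l : R, (fun n => u n / c n) @ \oo --> l.
  apply: cvg_ratio_two_step_fekete => n.
  - by rewrite /u ln_ge0 // ler1n muln_gt0 n_patterns_gt0.
  - by rewrite /c ltr0n card_En_gt0.
  - by rewrite /c ler_nat ltnW // card_En_ltS.
  - by rewrite /c -natrD ler_nat card_En_SS.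
  - rewrite /u -lnM ?posrE // -natrM ler_ln ?posrE ?ltr0n ?muln_gt0 ?n_patterns_gt0 // ler_nat.
    by have := n_patterns_SS n shiftX; nia.
exists (l - ln 4 * 0).
have -> : (fun n => ln ((n_patterns X n)%:R : R) / ((card_En n)%:R : R)) =
          (fun n => u n / c n - ln 4 * (c n)^-1).
  apply: funext => n; rewrite /u natrM lnM ?posrE ?ltr0n ?n_patterns_gt0 //.
  by rewrite mulrDl addrAC subrr add0r.
by apply: cvgB => //; apply: cvgM; [exact: cvg_cst | exact: cvg_inv_card_En].
Qed.
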